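(* For any $\bar{y}>0$, with $\tilde{x}$ the unique zero of $H$, one has $D(\bar{y},\tilde{x})>0$ and $\mathcal{G}(\bar{y},\tilde{x})>\beta$; consequently the solution $\tilde{F}$ of the ODE $\tilde{F}'(y)=\mathcal{G}(y,\tilde{F}(y))$ with $\tilde{F}(\bar{y})=\tilde{x}$ satisfies $\tilde{F}'(\bar{y})>\beta$.
   Context: Fix constants $\mu\in\mathbb{R}$, $\kappa>0$, $\sigma>0$, $\rho>0$, $\beta>0$, $c\geq0$, $\bar{y}>0$. Let $D_\alpha(x)=\frac{e^{-x^2/4}}{\Gamma(-\alpha)}\int_0^\infty t^{-\alpha-1}e^{-t^2/2-xt}dt$ ($\alpha<0$) and $\psi(x)=e^{\frac{\kappa(x-\mu)^2}{2\sigma^2}}D_{-\rho/\kappa}\big(-\frac{x-\mu}{\sigma}\sqrt{2\kappa}\big)$, the strictly increasing positive solution of $\frac{\sigma^2}{2}u''+\kappa(\mu-x)u'-\rho u=0$. Let $\tilde{R}(x,y)=\frac{\mu\kappa+\rho x-\beta(\rho+2\kappa)y}{\rho(\rho+\kappa)}$. For $k\geq0$ let $Q_k(z)=\psi^{(k)}(z)\psi^{(k+2)}(z)-\psi^{(k+1)}(z)^2$, so $Q_0'(z)=\psi(z)\psi'''(z)-\psi'(z)\psi''(z)$. Define $H(x)=\psi'(x)(c-\tilde{R}(x,\bar{y}))+(\rho+\kappa)^{-1}\psi(x)$, which has a unique real zero $\tilde{x}$. Define $D(y,z)=\psi(z)\big[(\rho+\kappa)(c-\tilde{R}(z,y))Q_1(z)+Q_0'(z)\big]$,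 $N(y,z)=Q_0(z)\Big(\frac{\rho+2\kappa}{\rho}\psi'(z)+(\rho+\kappa)(c-\tilde{R}(z,y))\psi''(z)+\psi'(z)\Big)$, and $\mathcal{G}(y,z)=\beta N(y,z)/D(y,z)$ for $(y,z)\in\mathbb{R}^2$ with $D(y,z)\neq0$. *)

From Stdlib Require Import Reals Lra.
From Coquelicot Require Import Coquelicot.
Open Scope R_scope.

Definition Gamma_fn (s : R) : R :=
  RInt_gen (fun t => Rpower t (s - 1) * exp (- t))
           (at_right 0) (Rbar_locally p_infty).

(* Parabolic cylinder function, integral representation for alpha < 0:
   D_alpha(x) = e^{-x^2/4}/Gamma(-alpha) int_0^oo t^{-alpha-1} e^{-t^2/2 - x t} dt *)
Definition Dpc (alpha x : R) : R :=
  exp (- x ^ 2 / 4) / Gamma_fn (- alpha) *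
  RInt_gen (fun t => Rpower t (- alpha - 1) * exp (- t ^ 2 / 2 - x * t))
           (at_right 0) (Rbar_locally p_infty).

Definition psi (mu kappa sigma rho : R) (x : R) : R :=
  exp (kappa * (x - mu) ^ 2 / (2 * sigma ^ 2)) *
  Dpc (- rho / kappa) (- ((x - mu) / sigma) * sqrt (2 * kappa)).

Definition dpsi (mu kappa sigma rho : R) (k : nat) (x : R) : R :=
  Derive_n (psi mu kappa sigma rho) k x.

Definition Rtil (mu kappa rho beta : R) (x y : R) : R :=
  (mu * kappa + rho * x - beta * (rho + 2 * kappa) * y) / (rho * (rho + kappa)).

Definition Qk (mu kappa sigma rho : R) (k : nat) (z : R) : R :=
  dpsi mu kappa sigma rho k z * dpsi mu kappa sigma rho (k + 2) z
  - (dpsi mu kappa sigma rho (k + 1) z) ^ 2.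

Definition Q0' (mu kappa sigma rho : R) (z : R) : R :=
  dpsi mu kappa sigma rho 0 z * dpsi mu kappa sigma rho 3 z
  - dpsi mu kappa sigma rho 1 z * dpsi mu kappa sigma rho 2 z.

Definition Hfn (mu kappa sigma rho beta c ybar : R) (x : R) : R :=
  dpsi mu kappa sigma rho 1 x * (c - Rtil mu kappa rho beta x ybar)
  + / (rho + kappa) * psi mu kappa sigma rho x.

Definition Dfn (mu kappa sigma rho beta c : R) (y z : R) : R :=
  psi mu kappa sigma rho z *
  ((rho + kappa) * (c - Rtil mu kappa rho beta z y) * Qk mu kappa sigma rho 1 z
   + Q0' mu kappa sigma rho z).

Definition Nfn (mu kappa sigma rho beta c : R) (y z : R) : R :=
  Qk mu kappa sigma rho 0 z *
  ((rho + 2 * kappa) / rho * dpsi mu kappa sigma rho 1 z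
   + (rho + kappa) * (c - Rtil mu kappa rho beta z y) * dpsi mu kappa sigma rho 2 z
   + dpsi mu kappa sigma rho 1 z).

(* G(y,z) = beta N / D  (used only where D <> 0) *)
Definition Gfn (mu kappa sigma rho beta c : R) (y z : R) : R :=
  beta * Nfn mu kappa sigma rho beta c y z / Dfn mu kappa sigma rho beta c y z.

(* Write a = rho / kappa, s = sqrt (2 kappa) (x - mu) / sigma and
   M_b(s) = int_0^oo t^b exp (- t^2 / 2 + s t) dt.  The integral representation of
   D_{-a} gives psi(x) = M_(a-1)(s) / Gamma(a), and differentiating under the integral
   raises the power of t, so psi^(k)(x) = (sqrt (2 kappa) / sigma)^k M_(a-1+k)(s) / Gamma(a).
   By Cauchy-Schwarz b |-> M_b(s) is strictly log-convex, and integrating the derivative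
   of t^b exp (- t^2 / 2 + s t) gives b M_(b-1) = M_(b+1) - s M_b.  Together these yield
   psi'^2 < psi psi'' and rho psi psi'' < (rho + kappa) psi'^2.
   At the zero x~ of H, (rho + kappa) (c - R~) = - psi / psi'; substituting this, psi'''
   cancels and D = psi psi'' Q_0 / psi', N = Q_0 (2 (rho + kappa) psi'^2 / rho - psi psi'') / psi',
   so the two inequalities give D > 0 and N > D. *)

From Stdlib Require Import Reals Lra FunctionalExtensionality.
From Coquelicot Require Import Coquelicot.
Open Scope R_scope.

Lemma exp_le_compat (x y : R) : x <= y -> exp x <= exp y.
Proof. intros [H|H]; [left; apply exp_increasing; exact H | right; subst; reflexivity]. Qed.

Lemma Rabs_exp_sub1_le (x : R) : Rabs (exp x - 1) <= Rabs x * exp (Rabs x).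
Proof.
  destruct (MVT_abs exp exp 0 x) as [c [E Hc]].
  { intros; apply derivable_pt_lim_exp. }
  rewrite exp_0 in E. rewrite E, Rminus_0_r, Rabs_pos_eq by (left; apply exp_pos).
  rewrite Rmult_comm. apply Rmult_le_compat_l; [apply Rabs_pos|].
  apply exp_le_compat. unfold Rmin, Rmax in Hc; destruct Rle_dec;
  [rewrite Rabs_pos_eq | rewrite Rabs_left]; lra.
Qed.

Lemma Rabs_exp_sub1_sub_le (x : R) : Rabs (exp x - 1 - x) <= x ^ 2 * exp (Rabs x).
Proof.
  destruct (MVT_abs (fun y => exp y - y) (fun y => exp y - 1) 0 x) as [c [E Hc]].
  { intros; apply derivable_pt_lim_minus;
      [apply derivable_pt_lim_exp | apply derivable_pt_lim_id]. }
  rewrite exp_0, Rminus_0_r in E.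
  replace (exp x - 1 - x) with (exp x - x - 1) by ring. rewrite E.
  assert (Hcx : Rabs c <= Rabs x).
  { unfold Rmin, Rmax in Hc; destruct Rle_dec;
    [rewrite (Rabs_pos_eq x) | rewrite (Rabs_left x)]; try lra;
    apply Rabs_le; lra. }
  assert (Rabs (exp c - 1) <= Rabs x * exp (Rabs x)).
  { eapply Rle_trans; [apply Rabs_exp_sub1_le|].
    apply Rmult_le_compat; auto using Rabs_pos, exp_le_compat; left; apply exp_pos. }
  replace (x ^ 2) with (Rabs x * Rabs x) by (rewrite <- pow2_abs; ring).
  rewrite Rminus_0_r. pose proof (Rabs_pos x). nra.
Qed.

Lemma Rpower_le_exp_half (b : R) : exists K, forall t, 1 <= t -> Rpower t b <= exp (t / 2 + K).
Proof.
  set (B := Rabs b + 1).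
  assert (HB : 0 < B) by (unfold B; pose proof (Rabs_pos b); lra).
  exists (B * ln (2 * B)). intros t Ht. apply exp_le_compat.
  assert (Hlnt : 0 <= ln t) by (rewrite <- ln_1; apply ln_le; lra).
  assert (b * ln t <= B * ln t).
  { apply Rmult_le_compat_r; auto. unfold B. pose proof (Rle_abs b); lra. }
  assert (Hsplit : ln t = ln (2 * B) + ln (t / (2 * B))).
  { rewrite <- ln_mult by (try apply Rdiv_lt_0_compat; lra). f_equal. field; lra. }
  pose proof (exp_ineq1_le (ln (t / (2 * B)))) as Hln.
  rewrite exp_ln in Hln by (apply Rdiv_lt_0_compat; lra).
  assert (B * ln (t / (2 * B)) <= B * (t / (2 * B) - 1)) by (apply Rmult_le_compat_l; lra).
  assert (B * (t / (2 * B) - 1) = t / 2 - B) by (field; lra).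
  nra.
Qed.

Lemma Rpower_at_right_0 (K c eps : R) : 0 < K -> 0 < c -> 0 < eps ->
  at_right 0 (fun t => K * Rpower t c < eps).
Proof.
  intros HK Hc Heps.
  apply (filter_imp (fun t => ln t < ln (eps / K) / c)).
  - intros t Ht. apply (Rmult_lt_reg_l (/ K)); [apply Rinv_0_lt_compat, HK|].
    replace (/ K * (K * Rpower t c)) with (Rpower t c) by (field; lra).
    replace (/ K * eps) with (exp (ln (eps / K)))
      by (rewrite exp_ln; [field | apply Rdiv_lt_0_compat]; lra).
    apply exp_increasing. apply (Rmult_lt_compat_l c) in Ht; [|exact Hc].
    replace (c * (ln (eps / K) / c)) with (ln (eps / K)) in Ht by (field; lra). exact Ht.
  - apply (is_lim_ln_0 (fun y => y < ln (eps / K) / c)). exists (ln (eps / K) / c). auto.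
Qed.

Lemma exp_neg_half_at_p_infty (K eps : R) : 0 < K -> 0 < eps ->
  Rbar_locally p_infty (fun t => K * exp (- t / 2) < eps).
Proof.
  intros HK Heps. exists (-2 * ln (eps / K)). intros t Ht.
  apply (Rmult_lt_reg_l (/ K)); [apply Rinv_0_lt_compat, HK|].
  replace (/ K * (K * exp (- t / 2))) with (exp (- t / 2)) by (field; lra).
  replace (/ K * eps) with (exp (ln (eps / K)))
    by (rewrite exp_ln; [field | apply Rdiv_lt_0_compat]; lra).
  apply exp_increasing. lra.
Qed.

Lemma at_right_0_bounded (d : R) : 0 < d -> at_right 0 (fun t => 0 < t < d).
Proof.
  intros Hd. exists (mkposreal d Hd). intros t Ht Htpos.
  change (Rabs (t - 0) < d) in Ht. rewrite Rminus_0_r, Rabs_pos_eq in Ht; lra.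
Qed.

Notation is_RInt_0_inf f l := (is_RInt_gen f (at_right 0) (Rbar_locally p_infty) l).

Definition continuous_on_pos (f : R -> R) : Prop := forall t, 0 < t -> continuous f t.

Lemma filter_prod_0_inf_pos :
  filter_prod (at_right 0) (Rbar_locally p_infty) (fun ab => 0 < fst ab /\ 0 < snd ab).
Proof.
  apply (Filter_prod _ _ _ (fun u => 0 < u) (fun v => 0 < v)); auto.
  - exists (mkposreal 1 Rlt_0_1). auto.
  - exists 0. auto.
Qed.

Lemma ex_RInt_continuous_on_pos (f : R -> R) (u v : R) :
  continuous_on_pos f -> 0 < u -> 0 < v -> ex_RInt f u v.
Proof.
  intros Hc Hu Hv. apply (ex_RInt_continuous (V := R_CompleteNormedModule)).
  intros z Hz. apply Hc. pose proof (Rmin_glb_lt u v 0 Hu Hv). lra.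
Qed.

Lemma is_RInt_0_inf_ext (f g : R -> R) (l : R) : (forall t, 0 < t -> f t = g t) ->
  is_RInt_0_inf f l -> is_RInt_0_inf g l.
Proof.
  intros Hfg. apply is_RInt_gen_ext.
  eapply filter_imp; [|exact filter_prod_0_inf_pos]. intros [u v] [Hu Hv] t Ht. simpl in *.
  apply Hfg. pose proof (Rmin_glb_lt u v 0 Hu Hv). lra.
Qed.

Lemma is_RInt_0_inf_unique (f : R -> R) (l1 l2 : R) :
  is_RInt_0_inf f l1 -> is_RInt_0_inf f l2 -> l1 = l2.
Proof.
  intros H1 H2. apply (is_RInt_gen_unique (V := R_CompleteNormedModule)) in H1, H2.
  congruence.
Qed.

Lemma is_RInt_0_inf_comb3 (f1 f2 f3 : R -> R) (l1 l2 l3 c1 c2 c3 : R) :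
  is_RInt_0_inf f1 l1 -> is_RInt_0_inf f2 l2 -> is_RInt_0_inf f3 l3 ->
  is_RInt_0_inf (fun t => c1 * f1 t + c2 * f2 t + c3 * f3 t) (c1 * l1 + c2 * l2 + c3 * l3).
Proof.
  intros H1 H2 H3.
  apply (is_RInt_gen_plus (fun t => c1 * f1 t + c2 * f2 t) (fun t => c3 * f3 t)
           (c1 * l1 + c2 * l2) (c3 * l3));
    [apply (is_RInt_gen_plus (fun t => c1 * f1 t) (fun t => c2 * f2 t) (c1 * l1) (c2 * l2)) |].
  - apply (is_RInt_gen_scal f1 c1 l1 H1).
  - apply (is_RInt_gen_scal f2 c2 l2 H2).
  - apply (is_RInt_gen_scal f3 c3 l3 H3).
Qed.

Lemma is_RInt_0_inf_pos (f : R -> R) (p q l : R) :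
  continuous_on_pos f -> (forall t, 0 < t -> 0 <= f t) ->
  0 < p < q -> (forall t, p < t < q -> 0 < f t) -> is_RInt_0_inf f l -> 0 < l.
Proof.
  intros Hc Hf Hpq Hfpq Hl.
  set (m := RInt f p q).
  assert (Hm : 0 < m) by (apply RInt_gt_0; try lra; auto; intros; apply Hc; lra).
  destruct (Rlt_or_le l m) as [Hlm|Hlm]; [exfalso | lra].
  assert (Hlm' : 0 < m - l) by lra.
  assert (Hball : filter_prod (at_right 0) (Rbar_locally p_infty)
    (fun ab => exists I, is_RInt f (fst ab) (snd ab) I /\ ball l (mkposreal _ Hlm') I))
    by exact (Hl _ (locally_ball l (mkposreal _ Hlm'))).
  assert (Hout : filter_prod (at_right 0) (Rbar_locally p_infty)
                   (fun ab => 0 < fst ab < p /\ q < snd ab)).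
  { apply (Filter_prod _ _ _ (fun u => 0 < u < p) (fun v => q < v)); auto.
    - apply at_right_0_bounded; lra.
    - exists q. auto. }
  destruct (filter_ex _ (filter_and _ _ Hball Hout)) as [[u v] [[I [HI Hball_I]] [Hu Hv]]].
  simpl in *. apply (is_RInt_unique (V := R_CompleteNormedModule)) in HI. subst I.
  (* the two tails are nonnegative, so the integral over (u,v) is at least m > l *)
  assert (E : RInt f u v = RInt f u p + m + RInt f q v).
  { unfold m. rewrite <- (RInt_Chasles f u p v), <- (RInt_Chasles f p q v);
      try (apply ex_RInt_continuous_on_pos; auto; lra).
    unfold plus; simpl. ring. }
  assert (Htail : forall x y, 0 < x <= y -> 0 <= RInt f x y).
  { intros x y Hxy. apply RInt_ge_0; [lra | apply ex_RInt_continuous_on_pos; auto; lra |].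
    intros; apply Hf; lra. }
  pose proof (Htail u p ltac:(lra)). pose proof (Htail q v ltac:(lra)).
  change (Rabs (RInt f u v - l) < m - l) in Hball_I.
  pose proof (Rle_abs (RInt f u v - l)). lra.
Qed.

Lemma Rabs_RInt_le_primitive (f g G : R -> R) (x y : R) :
  continuous_on_pos f -> (forall t, 0 < t -> 0 <= f t) -> 0 < x -> 0 < y ->
  (forall t, Rmin x y < t < Rmax x y -> f t <= g t) -> is_RInt g x y (G y - G x) ->
  Rabs (RInt f x y) <= Rabs (G y - G x).
Proof.
  intros Hc Hf.
  assert (Hle : forall x y, 0 < x <= y -> (forall t, x < t < y -> f t <= g t) ->
            is_RInt g x y (G y - G x) -> Rabs (RInt f x y) <= Rabs (G y - G x)).
  { clear x y. intros x y Hxy Hfg Hg.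
    assert (Hex : ex_RInt f x y) by (apply ex_RInt_continuous_on_pos; auto; lra).
    assert (0 <= RInt f x y) by (apply RInt_ge_0; auto; try lra; intros; apply Hf; lra).
    assert (RInt f x y <= G y - G x)
      by (apply (is_RInt_le f g x y); auto; try lra;
          apply (RInt_correct (V := R_CompleteNormedModule)), Hex).
    rewrite !Rabs_pos_eq; lra. }
  intros Hx Hy Hfg Hg. destruct (Rle_dec x y) as [Hxy|Hxy].
  - apply Hle; auto. intros t Ht; apply Hfg. rewrite Rmin_left, Rmax_right; lra.
  - rewrite <- (opp_RInt_swap (V := R_CompleteNormedModule))
      by (apply ex_RInt_continuous_on_pos; auto).
    unfold opp; simpl. rewrite Rabs_Ropp, Rabs_minus_sym.
    apply Hle; [lra | |].
    + intros t Ht; apply Hfg. rewrite Rmin_right, Rmax_left; lra.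
    + replace (G x - G y) with (opp (G y - G x)) by (unfold opp; simpl; ring).
      apply (is_RInt_swap (V := R_NormedModule)), Hg.
Qed.

Lemma Rpower_derive (b t : R) : 0 < t -> is_derive (fun x => Rpower x b) t (b * Rpower t (b - 1)).
Proof. intros; apply is_derive_Reals, derivable_pt_lim_power; auto. Qed.

Lemma Rpower_continuous (b t : R) : 0 < t -> continuous (fun x => Rpower x b) t.
Proof.
  intros. apply (ex_derive_continuous (K := R_AbsRing) (V := R_NormedModule)).
  eexists. apply Rpower_derive; auto.
Qed.

Lemma Rpower_pos (x b : R) : 0 < Rpower x b.
Proof. apply exp_pos. Qed.

Section DominatedOnHalfLine.

Variables (f : R -> R) (b C : R).
Hypotheses (Hb : -1 < b) (HC : 0 < C) (Hf_cont : continuous_on_pos f)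
  (Hf_nonneg : forall t, 0 < t -> 0 <= f t)
  (Hf_near_0 : forall t, 0 < t <= 1 -> f t <= C * Rpower t b)
  (Hf_near_inf : forall t, 1 <= t -> f t <= C * exp (- t / 2)).

Lemma Rabs_RInt_le_near_0 (x y : R) : 0 < x <= 1 -> 0 < y <= 1 ->
  Rabs (RInt f x y) <= C / (b + 1) * Rpower x (b + 1) + C / (b + 1) * Rpower y (b + 1).
Proof.
  intros Hx Hy. set (G := fun t => C / (b + 1) * Rpower t (b + 1)).
  assert (HG : forall t, 0 < G t)
    by (intros; apply Rmult_lt_0_compat; [apply Rdiv_lt_0_compat | apply Rpower_pos]; lra).
  assert (Hpos : forall t, Rmin x y <= t <= Rmax x y -> 0 < t)
    by (intros; pose proof (Rmin_glb_lt x y 0); lra).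
  eapply Rle_trans.
  - apply (Rabs_RInt_le_primitive f (fun t => C * Rpower t b) G); try lra; auto.
    + intros t Ht. apply Hf_near_0. split; [apply Hpos; lra|].
      apply (Rle_trans _ (Rmax x y)); [lra | apply Rmax_lub; lra].
    + apply (is_RInt_derive (V := R_CompleteNormedModule) G).
      * intros t Ht. replace (C * Rpower t b) with (C / (b + 1) * ((b + 1) * Rpower t (b + 1 - 1)))
          by (replace (b + 1 - 1) with b by ring; field; lra).
        apply (is_derive_scal (fun t => Rpower t (b + 1))), Rpower_derive, Hpos; lra.
      * intros t Ht. apply (continuous_mult (K := R_AbsRing) (fun _ => C));
          [apply continuous_const | apply Rpower_continuous, Hpos; lra].
  - pose proof (HG x). pose proof (HG y). unfold Rabs; destruct Rcase_abs; unfold G in *; lra.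
Qed.

Lemma Rabs_RInt_le_near_inf (x y : R) : 1 <= x -> 1 <= y ->
  Rabs (RInt f x y) <= 2 * C * exp (- x / 2) + 2 * C * exp (- y / 2).
Proof.
  intros Hx Hy. set (G := fun t => - (2 * C) * exp (- t / 2)).
  eapply Rle_trans.
  - apply (Rabs_RInt_le_primitive f (fun t => C * exp (- t / 2)) G); try lra; auto.
    + intros t Ht. apply Hf_near_inf.
      apply (Rle_trans _ (Rmin x y)); [apply Rmin_glb | ]; lra.
    + apply (is_RInt_derive (V := R_CompleteNormedModule) G).
      * intros t _. unfold G. auto_derive; auto. unfold Rdiv; field.
      * intros t _. apply (ex_derive_continuous (K := R_AbsRing) (V := R_NormedModule)).
        auto_derive. auto.
  - assert (0 < C * exp (- x / 2)) by (apply Rmult_lt_0_compat; [lra | apply exp_pos]).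
    assert (0 < C * exp (- y / 2)) by (apply Rmult_lt_0_compat; [lra | apply exp_pos]).
    unfold Rabs; destruct Rcase_abs; unfold G in *; lra.
Qed.

Lemma ex_RInt_0_inf_dominated : exists l, is_RInt_0_inf f l.
Proof.
  set (If := fun ab : R * R => RInt f (fst ab) (snd ab)).
  assert (Hcauchy : exists l : R_CompleteSpace,
             filterlim If (filter_prod (at_right 0) (Rbar_locally p_infty)) (locally l)).
  { apply (filterlim_locally_cauchy (U := R_CompleteSpace)). intros [eps Heps]. simpl.
    assert (Hsmall : at_right 0 (fun u => 0 < u < 1 /\ C / (b + 1) * Rpower u (b + 1) < eps / 4))
      by (apply filter_and; [apply at_right_0_bounded | apply Rpower_at_right_0;
            try apply Rdiv_lt_0_compat]; lra).
    assert (Hlarge : Rbar_locally p_infty (fun v => 1 < v /\ 2 * C * exp (- v / 2) < eps / 4))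
      by (apply filter_and; [exists 1; auto | apply exp_neg_half_at_p_infty; lra]).
    exists (fun ab => (0 < fst ab < 1 /\ C / (b + 1) * Rpower (fst ab) (b + 1) < eps / 4) /\
                      (1 < snd ab /\ 2 * C * exp (- snd ab / 2) < eps / 4)).
    split; [exact (Filter_prod _ _ _ _ _ Hsmall Hlarge (fun u v Hu Hv => conj Hu Hv))|].
    intros [u1 v1] [u2 v2] [Hu1 Hv1] [Hu2 Hv2]. simpl in *.
    change (Rabs (RInt f u2 v2 - RInt f u1 v1) < eps).
    assert (E : RInt f u2 v2 - RInt f u1 v1 = RInt f u2 u1 + RInt f v1 v2).
    { rewrite <- (RInt_Chasles f u2 v1 v2), <- (RInt_Chasles f u2 u1 v1);
        try (apply ex_RInt_continuous_on_pos; auto; lra).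
      unfold plus; simpl. ring. }
    rewrite E. eapply Rle_lt_trans; [apply Rabs_triang|].
    pose proof (Rabs_RInt_le_near_0 u2 u1 ltac:(lra) ltac:(lra)).
    pose proof (Rabs_RInt_le_near_inf v1 v2 ltac:(lra) ltac:(lra)).
    lra. }
  destruct Hcauchy as [l Hl]. exists l.
  apply (filterlimi_lim_ext_loc If); auto.
  eapply filter_imp; [|exact filter_prod_0_inf_pos]. intros [u v] [Hu Hv].
  apply (RInt_correct (V := R_CompleteNormedModule)), ex_RInt_continuous_on_pos; auto.
Qed.

Lemma dominated_lim_at_right_0 : 0 < b -> filterlim f (at_right 0) (locally 0).
Proof.
  intros Hb0. apply filterlim_locally. intros [eps Heps]. simpl.
  apply (filter_imp (F := at_right 0) (fun t => 0 < t < 1 /\ C * Rpower t b < eps)).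
  - intros t [Ht Hpow]. change (Rabs (f t - 0) < eps).
    rewrite Rminus_0_r, Rabs_pos_eq by (apply Hf_nonneg; lra).
    pose proof (Hf_near_0 t ltac:(lra)). lra.
  - apply filter_and; [apply at_right_0_bounded | apply Rpower_at_right_0]; lra.
Qed.

Lemma dominated_lim_at_p_infty : filterlim f (Rbar_locally p_infty) (locally 0).
Proof.
  apply filterlim_locally. intros [eps Heps]. simpl.
  apply (filter_imp (F := Rbar_locally p_infty) (fun t => 1 < t /\ C * exp (- t / 2) < eps)).
  - intros t [Ht Hexp]. change (Rabs (f t - 0) < eps).
    rewrite Rminus_0_r, Rabs_pos_eq by (apply Hf_nonneg; lra).
    pose proof (Hf_near_inf t ltac:(lra)). lra.
  - apply filter_and; [exists 1; auto | apply exp_neg_half_at_p_infty; lra].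
Qed.

End DominatedOnHalfLine.

Lemma Gamma_fn_pos (a : R) : 0 < a -> 0 < Gamma_fn a.
Proof.
  intros Ha. set (g := fun t => Rpower t (a - 1) * exp (- t)).
  assert (Hc : continuous_on_pos g).
  { intros t Ht. apply (continuous_mult (K := R_AbsRing)); [apply Rpower_continuous; auto|].
    apply (ex_derive_continuous (K := R_AbsRing) (V := R_NormedModule)). auto_derive. auto. }
  assert (Hg : forall t, 0 < t -> 0 < g t)
    by (intros; apply Rmult_lt_0_compat; [apply Rpower_pos | apply exp_pos]).
  destruct (Rpower_le_exp_half (a - 1)) as [K HK].
  destruct (ex_RInt_0_inf_dominated g (a - 1) (Rmax 1 (exp K))) as [l Hl]; auto.
  - lra.
  - apply (Rlt_le_trans _ 1); [lra | apply Rmax_l].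
  - intros; left; auto.
  - intros t Ht. unfold g. rewrite Rmult_comm.
    apply Rmult_le_compat; [left; apply exp_pos | left; apply Rpower_pos | | lra].
    apply (Rle_trans _ 1); [|apply Rmax_l]. rewrite <- exp_0. apply exp_le_compat. lra.
  - intros t Ht. unfold g.
    apply (Rle_trans _ (exp (t / 2 + K) * exp (- t)));
      [apply Rmult_le_compat_r; [left; apply exp_pos | apply HK; auto] |].
    replace (exp (t / 2 + K) * exp (- t)) with (exp K * exp (- t / 2))
      by (rewrite <- !exp_plus; f_equal; field).
    apply Rmult_le_compat_r; [left; apply exp_pos | apply Rmax_r].
  - unfold Gamma_fn. fold g.
    rewrite (is_RInt_gen_unique (V := R_CompleteNormedModule) _ _ Hl).
    apply (is_RInt_0_inf_pos g 1 2 l); auto; [intros; left; auto | lra | intros; apply Hg; lra].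
Qed.

Definition pc_kernel (b s t : R) : R := Rpower t b * exp (- t ^ 2 / 2 + s * t).

(* [pc_moment b s = Gamma (b + 1) * exp (s ^ 2 / 4) * D_{-b-1}(-s)] *)
Definition pc_moment (b s : R) : R :=
  RInt_gen (pc_kernel b s) (at_right 0) (Rbar_locally p_infty).

Lemma pc_kernel_pos (b s t : R) : 0 < pc_kernel b s t.
Proof. apply Rmult_lt_0_compat; [apply Rpower_pos | apply exp_pos]. Qed.

Lemma is_derive_pc_kernel (b s t : R) : 0 < t ->
  is_derive (pc_kernel b s) t (b * pc_kernel (b - 1) s t + (s - t) * pc_kernel b s t).
Proof.
  intros Ht. unfold pc_kernel.
  replace (b * (Rpower t (b - 1) * exp (- t ^ 2 / 2 + s * t)) +
           (s - t) * (Rpower t b * exp (- t ^ 2 / 2 + s * t)))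
    with (b * Rpower t (b - 1) * exp (- t ^ 2 / 2 + s * t) +
          Rpower t b * ((s - t) * exp (- t ^ 2 / 2 + s * t))) by ring.
  apply (is_derive_mult (fun x => Rpower x b) (fun x => exp (- x ^ 2 / 2 + s * x)));
    [apply Rpower_derive; auto | | intros; apply Rmult_comm].
  auto_derive; auto.
  replace (- (t * (t * 1)) * / 2 + s * t) with (- t ^ 2 / 2 + s * t) by field. field.
Qed.

Lemma pc_kernel_continuous (b s : R) : continuous_on_pos (pc_kernel b s).
Proof.
  intros t Ht. apply (ex_derive_continuous (K := R_AbsRing) (V := R_NormedModule)).
  eexists. apply is_derive_pc_kernel; auto.
Qed.

Lemma pc_kernel_mul_t (b s t : R) : 0 < t -> t * pc_kernel b s t = pc_kernel (b + 1) s t.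
Proof. intros Ht. unfold pc_kernel. rewrite Rpower_plus, Rpower_1 by exact Ht. ring. Qed.

Lemma pc_kernel_shift (b s h t : R) : pc_kernel b (s + h) t = pc_kernel b s t * exp (h * t).
Proof. unfold pc_kernel. rewrite Rmult_assoc, <- exp_plus. do 2 f_equal. ring. Qed.

Lemma pc_kernel_dominated (b s : R) : exists C, 0 < C /\
  (forall t, 0 < t <= 1 -> pc_kernel b s t <= C * Rpower t b) /\
  (forall t, 1 <= t -> pc_kernel b s t <= C * exp (- t / 2)).
Proof.
  destruct (Rpower_le_exp_half b) as [K HK].
  set (C0 := exp (Rabs s)). set (Cinf := exp (K + (s + 1) ^ 2 / 2)).
  exists (Rmax C0 Cinf). split; [|split].
  - apply (Rlt_le_trans _ C0); [apply exp_pos | apply Rmax_l].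
  - intros t Ht. unfold pc_kernel. rewrite Rmult_comm.
    apply Rmult_le_compat_r; [left; apply Rpower_pos|].
    apply (Rle_trans _ C0); [|apply Rmax_l]. apply exp_le_compat.
    pose proof (Rle_abs s). pose proof (Rabs_pos s).
    assert (s * t <= Rabs s) by (destruct (Rle_dec 0 s); nra). nra.
  - intros t Ht. unfold pc_kernel.
    apply (Rle_trans _ (Cinf * exp (- t / 2)));
      [| apply Rmult_le_compat_r; [left; apply exp_pos | apply Rmax_r]].
    apply (Rle_trans _ (exp (t / 2 + K) * exp (- t ^ 2 / 2 + s * t))).
    + apply Rmult_le_compat_r; [left; apply exp_pos | apply HK; auto].
    + unfold Cinf. rewrite <- !exp_plus. apply exp_le_compat.
      pose proof (pow2_ge_0 (t - (s + 1))). nra.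
Qed.

Lemma is_RInt_pc_moment (b s : R) : -1 < b -> is_RInt_0_inf (pc_kernel b s) (pc_moment b s).
Proof.
  intros Hb. destruct (pc_kernel_dominated b s) as [C [HC [H0 Hinf]]].
  destruct (ex_RInt_0_inf_dominated (pc_kernel b s) b C) as [l Hl];
    auto using pc_kernel_continuous.
  { intros; left; apply pc_kernel_pos. }
  unfold pc_moment. rewrite (is_RInt_gen_unique (V := R_CompleteNormedModule) _ _ Hl). exact Hl.
Qed.

Lemma pc_moment_pos (b s : R) : -1 < b -> 0 < pc_moment b s.
Proof.
  intros Hb. apply (is_RInt_0_inf_pos (pc_kernel b s) 1 2);
    auto using pc_kernel_continuous, is_RInt_pc_moment.
  - intros; left; apply pc_kernel_pos.
  - lra.
  - intros; apply pc_kernel_pos.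
Qed.

Lemma pc_kernel_taylor (b s h t : R) : 0 < t -> Rabs h <= 1 ->
  Rabs (pc_kernel b (s + h) t - pc_kernel b s t - h * pc_kernel (b + 1) s t)
    <= h ^ 2 * pc_kernel (b + 2) (s + 1) t.
Proof.
  intros Ht Hh.
  rewrite pc_kernel_shift, <- (pc_kernel_mul_t b s t Ht).
  replace (b + 2) with (b + 1 + 1) by ring.
  rewrite <- (pc_kernel_mul_t (b + 1) _ t Ht), <- (pc_kernel_mul_t b _ t Ht), pc_kernel_shift.
  replace (pc_kernel b s t * exp (h * t) - pc_kernel b s t - h * (t * pc_kernel b s t))
    with (pc_kernel b s t * (exp (h * t) - 1 - h * t)) by ring.
  replace (h ^ 2 * (t * (t * (pc_kernel b s t * exp (1 * t)))))
    with (pc_kernel b s t * ((h * t) ^ 2 * exp t)) by (rewrite Rmult_1_l; ring).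
  pose proof (pc_kernel_pos b s t).
  rewrite Rabs_mult, (Rabs_pos_eq (pc_kernel b s t)) by lra.
  apply Rmult_le_compat_l; [lra|].
  eapply Rle_trans; [apply Rabs_exp_sub1_sub_le|].
  apply Rmult_le_compat_l; [apply pow2_ge_0|]. apply exp_le_compat.
  rewrite Rabs_mult, (Rabs_pos_eq t) by lra. pose proof (Rabs_pos h). nra.
Qed.

Lemma pc_moment_taylor (b s h : R) : -1 < b -> Rabs h <= 1 ->
  Rabs (pc_moment b (s + h) - pc_moment b s - h * pc_moment (b + 1) s)
    <= h ^ 2 * pc_moment (b + 2) (s + 1).
Proof.
  intros Hb Hh.
  replace (pc_moment b (s + h) - pc_moment b s - h * pc_moment (b + 1) s)
    with (1 * pc_moment b (s + h) + (-1) * pc_moment b s + (- h) * pc_moment (b + 1) s) by ring.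
  assert (HI := is_RInt_0_inf_comb3 _ _ _ _ _ _ 1 (-1) (- h)
                 (is_RInt_pc_moment b (s + h) Hb) (is_RInt_pc_moment b s Hb)
                 (is_RInt_pc_moment (b + 1) s ltac:(lra))).
  assert (HJ := is_RInt_gen_scal (Fa := at_right 0) (Fb := Rbar_locally p_infty) _ (h ^ 2) _
                 (is_RInt_pc_moment (b + 2) (s + 1) ltac:(lra))).
  refine (RInt_gen_norm (V := R_CompleteNormedModule) _ _ _ _ _ _ HI HJ).
  - apply (Filter_prod _ _ _ (fun u => 0 < u < 1) (fun v => 1 < v)).
    + apply at_right_0_bounded; lra.
    + exists 1. auto.
    + simpl; intros; lra.
  - eapply filter_imp; [|exact filter_prod_0_inf_pos]. intros [u v] [Hu _] t Ht. simpl in *.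
    change (Rabs (1 * pc_kernel b (s + h) t + -1 * pc_kernel b s t + - h * pc_kernel (b + 1) s t)
              <= h ^ 2 * pc_kernel (b + 2) (s + 1) t).
    replace (1 * pc_kernel b (s + h) t + -1 * pc_kernel b s t + - h * pc_kernel (b + 1) s t)
      with (pc_kernel b (s + h) t - pc_kernel b s t - h * pc_kernel (b + 1) s t) by ring.
    apply pc_kernel_taylor; [lra | exact Hh].
Qed.

Lemma is_derive_pc_moment (b s : R) : -1 < b -> is_derive (pc_moment b) s (pc_moment (b + 1) s).
Proof.
  intros Hb. apply is_derive_Reals. intros eps Heps.
  set (B := pc_moment (b + 2) (s + 1)).
  assert (HB : 0 < B) by (apply pc_moment_pos; lra).
  assert (Hd : 0 < Rmin 1 (eps / B)) by (apply Rmin_glb_lt; [lra | apply Rdiv_lt_0_compat; lra]).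
  exists (mkposreal _ Hd). intros h Hh0 Hh. simpl in Hh.
  assert (Hh1 : Rabs h <= 1) by (pose proof (Rmin_l 1 (eps / B)); lra).
  assert (Hh2 : Rabs h * B < eps).
  { assert (Hh' : Rabs h < eps / B) by (pose proof (Rmin_r 1 (eps / B)); lra).
    apply (Rmult_lt_compat_r B) in Hh'; [|lra].
    replace (eps / B * B) with eps in Hh' by (field; lra). exact Hh'. }
  pose proof (pc_moment_taylor b s h Hb Hh1) as Hr. fold B in Hr.
  replace ((pc_moment b (s + h) - pc_moment b s) / h - pc_moment (b + 1) s)
    with ((pc_moment b (s + h) - pc_moment b s - h * pc_moment (b + 1) s) / h) by (field; auto).
  assert (Habs : 0 < Rabs h) by (apply Rabs_pos_lt; auto).
  unfold Rdiv. rewrite Rabs_mult, Rabs_inv.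
  apply (Rmult_lt_reg_r (Rabs h)); auto.
  rewrite Rmult_assoc, Rinv_l, Rmult_1_r by lra.
  replace (h ^ 2) with (Rabs h * Rabs h) in Hr by (rewrite <- pow2_abs; ring).
  nra.
Qed.

Lemma Derive_pc_kernel_continuous (b s x : R) : 0 < x -> continuous (Derive (pc_kernel b s)) x.
Proof.
  intros Hx.
  set (g := fun t => b * pc_kernel (b - 1) s t + (s - t) * pc_kernel b s t).
  apply (continuous_ext_loc _ g).
  - exists (mkposreal x Hx). intros y Hy. change (Rabs (y - x) < x) in Hy.
    apply Rabs_def2 in Hy. symmetry. apply is_derive_unique, is_derive_pc_kernel. lra.
  - unfold g. apply (continuous_plus (V := R_NormedModule)).
    + apply (continuous_mult (K := R_AbsRing) (fun _ => b));
        [apply continuous_const | apply pc_kernel_continuous; auto].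
    + apply (continuous_mult (K := R_AbsRing) (fun t => s - t));
        [| apply pc_kernel_continuous; auto].
      apply (continuous_minus (V := R_NormedModule));
        [apply continuous_const | apply continuous_id].
Qed.

Lemma is_RInt_Derive_pc_kernel (b s : R) : 0 < b ->
  is_RInt_0_inf (Derive (pc_kernel b s)) 0.
Proof.
  intros Hb. destruct (pc_kernel_dominated b s) as [C [HC [H0 Hinf]]].
  assert (Hnonneg : forall t, 0 < t -> 0 <= pc_kernel b s t) by (intros; left; apply pc_kernel_pos).
  enough (H : is_RInt_0_inf (Derive (pc_kernel b s)) (0 - 0))
    by (rewrite Rminus_0_r in H; exact H).
  apply is_RInt_gen_Derive;
    [| | apply (dominated_lim_at_right_0 _ b C); auto
       | apply (dominated_lim_at_p_infty _ C); auto];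
    (eapply filter_imp; [|exact filter_prod_0_inf_pos]);
    intros [u v] [Hu Hv] x Hx; simpl in *;
    assert (Hx0 : 0 < x) by (pose proof (Rmin_glb_lt u v 0 Hu Hv); lra).
  - eexists. apply is_derive_pc_kernel, Hx0.
  - apply Derive_pc_kernel_continuous, Hx0.
Qed.

Lemma pc_moment_recurrence (b s : R) : 0 < b ->
  b * pc_moment (b - 1) s = pc_moment (b + 1) s - s * pc_moment b s.
Proof.
  intros Hb.
  set (g := fun t => b * pc_kernel (b - 1) s t + (s - t) * pc_kernel b s t).
  assert (HI := is_RInt_Derive_pc_kernel b s Hb).
  apply (is_RInt_0_inf_ext _ g) in HI;
    [| intros; apply is_derive_unique, is_derive_pc_kernel; auto].
  assert (HJ := is_RInt_0_inf_comb3 _ _ _ _ _ _ b s (-1)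
                  (is_RInt_pc_moment (b - 1) s ltac:(lra)) (is_RInt_pc_moment b s ltac:(lra))
                  (is_RInt_pc_moment (b + 1) s ltac:(lra))).
  apply (is_RInt_0_inf_ext _ g) in HJ.
  - pose proof (is_RInt_0_inf_unique _ _ _ HI HJ). lra.
  - intros t Ht. unfold g. rewrite <- (pc_kernel_mul_t b s t Ht). ring.
Qed.

Lemma pc_moment_log_convex (b s : R) : -1 < b ->
  pc_moment (b + 1) s ^ 2 < pc_moment b s * pc_moment (b + 2) s.
Proof.
  intros Hb.
  set (m0 := pc_moment b s). set (m1 := pc_moment (b + 1) s). set (m2 := pc_moment (b + 2) s).
  assert (Hm0 : 0 < m0) by (apply pc_moment_pos; lra).
  set (lam := m1 / m0).
  set (f := fun t => pc_kernel b s t * (t - lam) ^ 2).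
  assert (HJ := is_RInt_0_inf_comb3 _ _ _ _ _ _ 1 (- 2 * lam) (lam ^ 2)
                  (is_RInt_pc_moment (b + 2) s ltac:(lra)) (is_RInt_pc_moment (b + 1) s ltac:(lra))
                  (is_RInt_pc_moment b s Hb)).
  fold m0 m1 m2 in HJ.
  apply (is_RInt_0_inf_ext _ f) in HJ.
  - apply (is_RInt_0_inf_pos f (Rabs lam + 1) (Rabs lam + 2)) in HJ.
    + replace (1 * m2 + -2 * lam * m1 + lam ^ 2 * m0) with ((m0 * m2 - m1 ^ 2) / m0) in HJ
        by (unfold lam; field; lra).
      apply (Rmult_lt_compat_r m0) in HJ; [|lra].
      replace ((m0 * m2 - m1 ^ 2) / m0 * m0) with (m0 * m2 - m1 ^ 2) in HJ by (field; lra). lra.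
    + intros t Ht. apply (continuous_mult (K := R_AbsRing)); [apply pc_kernel_continuous; auto|].
      apply (ex_derive_continuous (K := R_AbsRing) (V := R_NormedModule)). auto_derive. auto.
    + intros t Ht. apply Rmult_le_pos; [left; apply pc_kernel_pos | apply pow2_ge_0].
    + pose proof (Rabs_pos lam). lra.
    + intros t Ht. apply Rmult_lt_0_compat; [apply pc_kernel_pos|].
      pose proof (Rle_abs lam). apply pow_lt. lra.
  - intros t Ht. unfold f.
    replace (b + 2) with (b + 1 + 1) by ring.
    rewrite <- (pc_kernel_mul_t (b + 1) s t Ht), <- (pc_kernel_mul_t b s t Ht). ring.
Qed.

Lemma pc_moment_turan (b s : R) : 0 < b ->
  b * (pc_moment (b - 1) s * pc_moment (b + 1) s) < (b + 1) * pc_moment b s ^ 2.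
Proof.
  intros Hb.
  pose proof (pc_moment_recurrence b s Hb) as Hrec0.
  pose proof (pc_moment_recurrence (b + 1) s ltac:(lra)) as Hrec1.
  replace (b + 1 - 1) with b in Hrec1 by ring. replace (b + 1 + 1) with (b + 2) in Hrec1 by ring.
  pose proof (pc_moment_log_convex b s ltac:(lra)).
  pose proof (pc_moment_pos b s ltac:(lra)).
  (* with M_c := pc_moment c s:
     b M_(b-1) M_(b+1) = M_(b+1)^2 - s M_b M_(b+1) < M_b M_(b+2) - s M_b M_(b+1) = (b+1) M_b^2 *)
  replace (b * (pc_moment (b - 1) s * pc_moment (b + 1) s))
    with ((b * pc_moment (b - 1) s) * pc_moment (b + 1) s) by ring.
  replace ((b + 1) * pc_moment b s ^ 2) with (((b + 1) * pc_moment b s) * pc_moment b s) by ring.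
  rewrite Hrec0, Hrec1. nra.
Qed.

Section PsiAsMoment.

Variables (mu kappa sigma rho : R).
Hypotheses (Hkappa : 0 < kappa) (Hsigma : 0 < sigma) (Hrho : 0 < rho).

Let a := rho / kappa.
Let scale := sqrt (2 * kappa) / sigma.

Let a_pos : 0 < a.
Proof. apply Rdiv_lt_0_compat; assumption. Qed.

Let scale_pos : 0 < scale.
Proof. apply Rdiv_lt_0_compat; [apply sqrt_lt_R0; lra | assumption]. Qed.

Let Gamma_a_pos : 0 < Gamma_fn a.
Proof. apply Gamma_fn_pos, a_pos. Qed.

Lemma psi_eq_pc_moment (x : R) :
  psi mu kappa sigma rho x = pc_moment (a - 1) (scale * (x - mu)) / Gamma_fn a.
Proof.
  unfold psi, Dpc. replace (- (- rho / kappa)) with a by (unfold a; field; lra).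
  set (z := - ((x - mu) / sigma) * sqrt (2 * kappa)).
  assert (Hsqrt : sqrt (2 * kappa) * sqrt (2 * kappa) = 2 * kappa) by (apply sqrt_sqrt; lra).
  assert (Hexp : exp (kappa * (x - mu) ^ 2 / (2 * sigma ^ 2)) * exp (- z ^ 2 / 4) = 1).
  { rewrite <- exp_plus, <- exp_0. f_equal. unfold z.
    replace ((- ((x - mu) / sigma) * sqrt (2 * kappa)) ^ 2)
      with (((x - mu) / sigma) ^ 2 * (sqrt (2 * kappa) * sqrt (2 * kappa))) by ring.
    rewrite Hsqrt. field. lra. }
  assert (Hkernel : (fun t => Rpower t (a - 1) * exp (- t ^ 2 / 2 - z * t))
                    = pc_kernel (a - 1) (scale * (x - mu))).
  { apply functional_extensionality. intros t. unfold pc_kernel. do 2 f_equal.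
    unfold z, scale. field. lra. }
  rewrite Hkernel. fold (pc_moment (a - 1) (scale * (x - mu))).
  transitivity (exp (kappa * (x - mu) ^ 2 / (2 * sigma ^ 2)) * exp (- z ^ 2 / 4)
                * (pc_moment (a - 1) (scale * (x - mu)) / Gamma_fn a));
    [unfold Rdiv; ring | rewrite Hexp; ring].
Qed.

Lemma dpsi_eq_pc_moment (k : nat) (x : R) :
  dpsi mu kappa sigma rho k x
  = scale ^ k * pc_moment (a - 1 + INR k) (scale * (x - mu)) / Gamma_fn a.
Proof.
  revert x. unfold dpsi. induction k as [|k IH]; intros x; simpl Derive_n.
  - rewrite psi_eq_pc_moment, Rplus_0_r. simpl. unfold Rdiv. ring.
  - assert (Hb : -1 < a - 1 + INR k) by (pose proof (pos_INR k); pose proof a_pos; lra).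
    apply is_derive_unique.
    apply (is_derive_ext
             (fun y => scale ^ k / Gamma_fn a * pc_moment (a - 1 + INR k) (scale * (y - mu))));
      [intros y; rewrite IH; unfold Rdiv; rewrite !Rmult_assoc; f_equal; apply Rmult_comm |].
    replace (scale ^ S k * pc_moment (a - 1 + INR (S k)) (scale * (x - mu)) / Gamma_fn a)
      with (scale ^ k / Gamma_fn a * (scale * pc_moment (a - 1 + INR k + 1) (scale * (x - mu))))
      by (rewrite S_INR, Rplus_assoc; simpl; unfold Rdiv; ring).
    apply is_derive_scal.
    apply (is_derive_comp (pc_moment (a - 1 + INR k)) (fun y => scale * (y - mu)));
      [apply is_derive_pc_moment; exact Hb |].
    auto_derive; auto. ring.
Qed.

Lemma dpsi_pos (k : nat) (x : R) : 0 < dpsi mu kappa sigma rho k x.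
Proof.
  rewrite dpsi_eq_pc_moment. apply Rdiv_lt_0_compat; [|exact Gamma_a_pos].
  apply Rmult_lt_0_compat; [apply pow_lt, scale_pos|].
  apply pc_moment_pos. pose proof (pos_INR k). pose proof a_pos. lra.
Qed.

Lemma dpsi_log_convex (k : nat) (x : R) :
  dpsi mu kappa sigma rho (S k) x ^ 2
  < dpsi mu kappa sigma rho k x * dpsi mu kappa sigma rho (S (S k)) x.
Proof.
  rewrite !dpsi_eq_pc_moment, !S_INR.
  set (b := a - 1 + INR k). set (s := scale * (x - mu)).
  replace (a - 1 + (INR k + 1 + 1)) with (b + 2) by (unfold b; ring).
  replace (a - 1 + (INR k + 1)) with (b + 1) by (unfold b; ring).
  assert (Hb : -1 < b) by (unfold b; pose proof (pos_INR k); pose proof a_pos; lra).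
  assert (Hfactor : 0 < (scale ^ S k / Gamma_fn a) ^ 2)
    by (apply pow_lt, Rdiv_lt_0_compat; [apply pow_lt, scale_pos | exact Gamma_a_pos]).
  pose proof (pc_moment_log_convex b s Hb).
  replace ((scale ^ S k * pc_moment (b + 1) s / Gamma_fn a) ^ 2)
    with ((scale ^ S k / Gamma_fn a) ^ 2 * pc_moment (b + 1) s ^ 2) by (unfold Rdiv; ring).
  replace (scale ^ k * pc_moment b s / Gamma_fn a
           * (scale ^ S (S k) * pc_moment (b + 2) s / Gamma_fn a))
    with ((scale ^ S k / Gamma_fn a) ^ 2 * (pc_moment b s * pc_moment (b + 2) s))
    by (simpl; unfold Rdiv; ring).
  apply Rmult_lt_compat_l; assumption.
Qed.

Lemma dpsi_turan (x : R) :
  rho * (dpsi mu kappa sigma rho 0 x * dpsi mu kappa sigma rho 2 x)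
  < (rho + kappa) * dpsi mu kappa sigma rho 1 x ^ 2.
Proof.
  rewrite !dpsi_eq_pc_moment. simpl INR.
  set (s := scale * (x - mu)).
  replace (a - 1 + 0) with (a - 1) by ring. replace (a - 1 + 1) with a by ring.
  replace (a - 1 + (1 + 1)) with (a + 1) by ring.
  assert (Hfactor : 0 < kappa * (scale / Gamma_fn a) ^ 2)
    by (apply Rmult_lt_0_compat;
        [lra | apply pow_lt, Rdiv_lt_0_compat; [exact scale_pos | exact Gamma_a_pos]]).
  assert (Hrho_a : rho = a * kappa) by (unfold a; field; lra).
  pose proof (pc_moment_turan a s a_pos).
  match goal with |- ?lhs < ?rhs =>
    replace lhs
      with (kappa * (scale / Gamma_fn a) ^ 2 * (a * (pc_moment (a - 1) s * pc_moment (a + 1) s)))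
      by (rewrite Hrho_a; unfold Rdiv; ring);
    replace rhs with (kappa * (scale / Gamma_fn a) ^ 2 * ((a + 1) * pc_moment a s ^ 2))
      by (rewrite Hrho_a; unfold Rdiv; ring)
  end.
  apply Rmult_lt_compat_l; assumption.
Qed.

End PsiAsMoment.

Lemma D_pos_G_gt_beta_algebra (p0 p1 p2 p3 T rho kappa beta : R) :
  0 < rho -> 0 < kappa -> 0 < beta -> 0 < p0 -> 0 < p1 -> 0 < p2 ->
  p1 ^ 2 < p0 * p2 -> rho * (p0 * p2) < (rho + kappa) * p1 ^ 2 ->
  p1 * T + / (rho + kappa) * p0 = 0 ->
  let D := p0 * ((rho + kappa) * T * (p1 * p3 - p2 ^ 2) + (p0 * p3 - p1 * p2)) in
  0 < D /\
  beta < beta * ((p0 * p2 - p1 ^ 2)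
                 * ((rho + 2 * kappa) / rho * p1 + (rho + kappa) * T * p2 + p1)) / D.
Proof.
  intros Hrho Hkappa Hbeta Hp0 Hp1 Hp2 Hlc Hturan HT D.
  assert (ET : (rho + kappa) * T = - p0 / p1).
  { apply (Rmult_eq_reg_l p1); [|lra].
    replace (p1 * (- p0 / p1)) with (- p0) by (field; lra).
    apply (Rmult_eq_reg_l (/ (rho + kappa))); [|apply Rinv_neq_0_compat; lra].
    replace (/ (rho + kappa) * (p1 * ((rho + kappa) * T))) with (p1 * T) by (field; lra). lra. }
  set (Q := p0 * p2 - p1 ^ 2).
  assert (ED : D = p0 * p2 * Q / p1)
    by (unfold D, Q; rewrite ET; field; lra).
  assert (EN : Q * ((rho + 2 * kappa) / rho * p1 + (rho + kappa) * T * p2 + p1)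
               = Q * (2 * (rho + kappa) / rho * p1 ^ 2 - p0 * p2) / p1)
    by (rewrite ET; field; lra).
  assert (HD : 0 < D).
  { rewrite ED. apply Rdiv_lt_0_compat; [|lra].
    apply Rmult_lt_0_compat; [apply Rmult_lt_0_compat|unfold Q]; lra. }
  split; [exact HD|].
  fold Q. rewrite EN.
  assert (Hgap : p0 * p2 < 2 * (rho + kappa) / rho * p1 ^ 2 - p0 * p2).
  { replace (2 * (rho + kappa) / rho * p1 ^ 2) with (2 * ((rho + kappa) * p1 ^ 2) / rho)
      by (field; lra).
    apply (Rmult_lt_reg_l rho); [lra|].
    replace (rho * (2 * ((rho + kappa) * p1 ^ 2) / rho - p0 * p2))
      with (2 * ((rho + kappa) * p1 ^ 2) - rho * (p0 * p2)) by (field; lra).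
    lra. }
  apply (Rmult_lt_reg_r D); [exact HD|].
  replace (beta * (Q * (2 * (rho + kappa) / rho * p1 ^ 2 - p0 * p2) / p1) / D * D)
    with (beta * (Q * (2 * (rho + kappa) / rho * p1 ^ 2 - p0 * p2) / p1)) by (field; lra).
  rewrite ED. apply Rmult_lt_compat_l; [exact Hbeta|].
  unfold Rdiv. apply Rmult_lt_compat_r; [apply Rinv_0_lt_compat; exact Hp1|].
  rewrite (Rmult_comm Q). apply Rmult_lt_compat_r; [unfold Q; lra | exact Hgap].
Qed.

Theorem lemma4p3 (mu kappa sigma rho beta c ybar xt : R) :
  0 < kappa -> 0 < sigma -> 0 < rho -> 0 < beta -> 0 <= c -> 0 < ybar ->
  Hfn mu kappa sigma rho beta c ybar xt = 0 ->
  (forall x, Hfn mu kappa sigma rho beta c ybar x = 0 -> x = xt) ->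
  0 < Dfn mu kappa sigma rho beta c ybar xt /\
  beta < Gfn mu kappa sigma rho beta c ybar xt /\
  (forall (F : R -> R) (a b : R), a < ybar < b ->
     F ybar = xt ->
     (forall y, a < y < b -> is_derive F y (Gfn mu kappa sigma rho beta c y (F y))) ->
     beta < Derive F ybar).
Proof.
  intros Hkappa Hsigma Hrho Hbeta _ _ HH _.
  assert (Hmain : 0 < Dfn mu kappa sigma rho beta c ybar xt /\
                  beta < Gfn mu kappa sigma rho beta c ybar xt).
  { unfold Gfn, Nfn, Dfn, Qk, Q0', Hfn in *. simpl Nat.add.
    change (psi mu kappa sigma rho) with (dpsi mu kappa sigma rho 0) in *.
    apply D_pos_G_gt_beta_algebra; auto using dpsi_pos.
    - apply (dpsi_log_convex _ _ _ _ Hkappa Hsigma Hrho 0).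
    - apply dpsi_turan; auto. }
  destruct Hmain as [HD HG]. split; [exact HD | split; [exact HG |]].
  intros F a b Hab HF HF'.
  specialize (HF' ybar Hab). rewrite HF in HF'.
  rewrite (is_derive_unique _ _ _ HF'). exact HG.
Qed.
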